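(* For $m\ge 2$ and $E>0$ let $$f_m(E)=\frac{e^{-4E}\,\Gamma(m)\,I_{m-1}(4E)}{2m\,(2E)^{m-3}}.$$ (i) If $a>0$ and $E=a(m-1)$, then $f_m(E)$ decays exponentially in $m$: there is $c\in(0,1)$ with $f_m(a(m-1))=O(c^m)$. (ii) If $a>0$, $r<1$ and $E=am^r$, then $f_m(E)$ does not decay exponentially: for every $b\in(0,1)$, $f_m(am^r)/b^m\to\infty$ as $m\to\infty$. (iii) If $E=E_m$ vanishes exponentially in $m$ (i.e. $E_m=O(q^m)$ for some $q\in(0,1)$), then $f_m(E_m)$ decays exponentially in $m$.
   Context: $I_{m-1}$ is the modified Bessel function of the first kind of order $m-1$. The quantity $f_m(E)$ is the prefactor in the paper's Proposition 1: for a coherent input of total intensity $E$ on $m$ modes and a Haar-random linear optical circuit, the expected squared gradient of the compiling cost $1-|\langle\vec u|U(\theta)|\vec u\rangle|^2$ lies in $f_m(E)[\xi_{\min},\xi_{\max}]$, with $\xi_{\min},\xi_{\max}$ the minimal/maximal squared column norms of the generator matrix of the trained layer. *)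

From Stdlib Require Import Reals Arith Factorial.
From Coquelicot Require Import Coquelicot.
Open Scope R_scope.

(* Modified Bessel function of the first kind of integer order n:
   I_n(x) = sum_{k>=0} (x/2)^(2k+n) / (k! * Gamma(k+n+1)),  Gamma(k+n+1) = (k+n)!. *)
Definition besselI (n : nat) (x : R) : R :=
  Series (fun k : nat => (x / 2) ^ (2 * k + n) / (INR (fact k) * INR (fact (k + n)))).

(* f_m(E) = e^{-4E} Gamma(m) I_{m-1}(4E) / (2 m (2E)^{m-3}),  Gamma(m) = (m-1)!.
   Meaningful for m >= 2 and E > 0 (real power (2E)^(m-3) via Rpower). *)
Definition fm (m : nat) (E : R) : R :=
  exp (- (4 * E)) * INR (fact (m - 1)) * besselI (m - 1) (4 * E)
  / (2 * INR m * Rpower (2 * E) (INR m - 3)).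

Definition bigO_geom (u : nat -> R) (c : R) : Prop :=
  exists C : R, exists N : nat, forall m : nat, (N <= m)%nat -> Rabs (u m) <= C * c ^ m.

Definition exp_decay (u : nat -> R) : Prop :=
  exists c : R, 0 < c < 1 /\ bigO_geom u c.

From Stdlib Require Import Reals Lra Lia Factorial Arith.
From Coquelicot Require Import Coquelicot.
Open Scope R_scope.

(* Write m = v + 1 and z = 2E.  Then
     f_m(E) = e^{-4E} * (2E^2/m) * (v!/z^v) * I_v(2z),
   and the last two factors form the series sum_k v! z^(2k) / (k! (k+v)!), whose
   first term is 1.  Three elementary bounds on the Bessel series (from factorial
   inequalities) give
     (lower)     e^{-4E} 2E^2/m <= f_m(E),
     (Gaussian)  f_m(E) <= e^{-4E + 4E^2/m} 2E^2/m,
     (factorial) f_m(E) <= (v/(2E))^v 2E^2/m.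
   Part (i) follows from the Gaussian bound when a < 1 and from the factorial bound
   when a >= 1, each giving a bound A v q^v with q < 1, which decays exponentially.
   Part (iii) follows from the Gaussian bound, since E_m <= C q^m is bounded.
   Part (ii) follows from the lower bound: divided by b^m it equals
   2a^2 exp(L m - 4a m^r + (2r-1) ln m) with L = -ln b > 0, and the exponent tends
   to +oo because m^(r-1) -> 0 and ln m / m -> 0. *)

(* (a + b)! <= 2^(a+b) a! b!, i.e. a binomial coefficient is at most 2^n. *)
Lemma fact_add_le_pow2 (a b : nat) : (fact (a + b) <= 2 ^ (a + b) * fact a * fact b)%nat.
Proof.
  remember (a + b)%nat as n eqn:Hn. revert a b Hn.
  induction n as [|n IH]; intros a b Hn.
  - assert (a = 0%nat) by lia; assert (b = 0%nat) by lia; subst; simpl; lia.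
  - (* reduce the larger of a, b; by symmetry we may assume a <= b *)
    assert (Hsym : forall a b, (a + b = S n)%nat -> (a <= b)%nat ->
              (fact (a + b) <= 2 ^ (a + b) * fact a * fact b)%nat).
    { clear a b Hn. intros a [|b] Hn Hab; [lia|].
      specialize (IH a b ltac:(lia)).
      set (X := (2 ^ n * fact a * fact b)%nat) in IH.
      rewrite Hn. replace (2 ^ S n * fact a * fact (S b))%nat with (2 * S b * X)%nat
        by (unfold X; simpl fact; rewrite Nat.pow_succ_r'; ring).
      change (fact (S n)) with (S n * fact n)%nat.
      apply Nat.mul_le_mono; lia. }
    rewrite Hn. destruct (Nat.le_ge_cases a b) as [Hle|Hge]; [now apply Hsym|].
    rewrite Nat.mul_shuffle0, (Nat.add_comm a b). apply Hsym; lia.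
Qed.

(* v! (v+1)^k <= (k+v)!: each of the k extra factors is at least v+1. *)
Lemma fact_shift_lb (k v : nat) : (fact v * S v ^ k <= fact (k + v))%nat.
Proof.
  induction k as [|k IH].
  - simpl. lia.
  - change (fact (S k + v)) with (S (k + v) * fact (k + v))%nat.
    rewrite Nat.pow_succ_r', Nat.mul_comm, <- Nat.mul_assoc.
    apply Nat.mul_le_mono; [lia|]. now rewrite Nat.mul_comm.
Qed.

Lemma fact_le_pow (n : nat) : (fact n <= n ^ n)%nat.
Proof.
  induction n as [|n IH]; [simpl; lia|].
  change (fact (S n)) with (S n * fact n)%nat. rewrite Nat.pow_succ_r'.
  apply Nat.mul_le_mono_l. apply (Nat.le_trans _ _ _ IH), Nat.pow_le_mono_l. lia.
Qed.

Definition bessel_term (v : nat) (y : R) (k : nat) : R :=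
  y ^ (2 * k + v) / (INR (fact k) * INR (fact (k + v))).

Lemma besselI_Series (v : nat) (x : R) : besselI v x = Series (bessel_term v (x / 2)).
Proof. reflexivity. Qed.

Lemma is_series_exp (x : R) : is_series (fun k => x ^ k / INR (fact k)) (exp x).
Proof.
  eapply is_series_ext; [|exact (is_exp_Reals x)].
  intros k. simpl. now rewrite pow_n_pow.
Qed.

Lemma bessel_term_nonneg (v : nat) (y : R) (k : nat) : 0 <= y -> 0 <= bessel_term v y k.
Proof.
  intros Hy. unfold bessel_term. apply Rdiv_le_0_compat; [now apply pow_le|].
  apply Rmult_lt_0_compat; apply INR_fact_lt_0.
Qed.

(* Comparison with an exponential series: the denominators satisfy
   k! (k+v)! >= k! v! (v+1)^k. *)
Lemma bessel_term_le_gauss (v : nat) (y : R) (k : nat) : 0 <= y ->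
  bessel_term v y k <= y ^ v / INR (fact v) * ((y ^ 2 / INR (S v)) ^ k / INR (fact k)).
Proof.
  intros Hy. unfold bessel_term.
  assert (Hden := le_INR _ _ (fact_shift_lb k v)). rewrite mult_INR, pow_INR in Hden.
  pose proof (INR_fact_lt_0 k). pose proof (INR_fact_lt_0 v).
  assert (0 < INR (S v) ^ k) by (apply pow_lt, lt_0_INR; lia).
  replace (y ^ v / INR (fact v) * ((y ^ 2 / INR (S v)) ^ k / INR (fact k)))
    with (y ^ (2 * k + v) / (INR (fact k) * (INR (fact v) * INR (S v) ^ k)))
    by (unfold Rdiv; rewrite pow_add, pow_mult, Rpow_mult_distr, pow_inv; field; lra).
  unfold Rdiv. apply Rmult_le_compat_l; [now apply pow_le|].
  apply Rinv_le_contravar; [apply Rmult_lt_0_compat; nra|].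
  apply Rmult_le_compat_l; lra.
Qed.

(* Comparison with the Taylor series of exp(2y): with n = 2k+v,
   n! <= 2^n k! (k+v)!. *)
Lemma bessel_term_le_taylor (v : nat) (y : R) (k : nat) : 0 <= y ->
  bessel_term v y k <= (2 * y) ^ (2 * k + v) / INR (fact (2 * k + v)).
Proof.
  intros Hy. unfold bessel_term.
  assert (Hden := le_INR _ _ (fact_add_le_pow2 k (k + v))).
  replace (k + (k + v))%nat with (2 * k + v)%nat in Hden by lia.
  rewrite !mult_INR, pow_INR in Hden. replace (INR 2) with 2 in Hden by reflexivity.
  pose proof (INR_fact_lt_0 k). pose proof (INR_fact_lt_0 (k + v)).
  pose proof (INR_fact_lt_0 (2 * k + v)).
  assert (0 < 2 ^ (2 * k + v)) by (apply pow_lt; lra).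
  rewrite Rpow_mult_distr.
  replace (2 ^ (2 * k + v) * y ^ (2 * k + v) / INR (fact (2 * k + v)))
    with (y ^ (2 * k + v) / (INR (fact (2 * k + v)) / 2 ^ (2 * k + v))) by (field; lra).
  unfold Rdiv at 1 2. apply Rmult_le_compat_l; [now apply pow_le|].
  apply Rinv_le_contravar; [apply Rdiv_lt_0_compat; lra|].
  apply (Rmult_le_reg_r (2 ^ (2 * k + v))); [lra|].
  unfold Rdiv. rewrite Rmult_assoc, Rinv_l by lra. lra.
Qed.

(* The Bessel series converges, being dominated by an exponential series. *)
Lemma ex_series_bessel_term (v : nat) (y : R) : 0 <= y -> ex_series (bessel_term v y).
Proof.
  intros Hy.
  apply (ex_series_le (bessel_term v y)
           (fun k => y ^ v / INR (fact v) * ((y ^ 2 / INR (S v)) ^ k / INR (fact k)))).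
  - intros k. rewrite Rabs_pos_eq by now apply bessel_term_nonneg.
    now apply bessel_term_le_gauss.
  - exists (y ^ v / INR (fact v) * exp (y ^ 2 / INR (S v))).
    exact (is_series_scal_l _ _ _ (is_series_exp _)).
Qed.

(* The k = 0 term is a lower bound: I_v(x) >= (x/2)^v / v!. *)
Lemma besselI_ge_leading (v : nat) (x : R) : 0 <= x ->
  (x / 2) ^ v / INR (fact v) <= besselI v x.
Proof.
  intros Hx. rewrite besselI_Series.
  assert (Hy : 0 <= x / 2) by lra.
  pose proof (sum_incr _ 0 _
    (proj1 (is_series_Reals _ _) (Series_correct _ (ex_series_bessel_term v _ Hy)))
    (fun k => bessel_term_nonneg v _ k Hy)) as H0.
  unfold bessel_term in H0. simpl in H0. now rewrite Rmult_1_l in H0.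
Qed.

Lemma besselI_le_gauss (v : nat) (x : R) : 0 <= x ->
  besselI v x <= (x / 2) ^ v / INR (fact v) * exp ((x / 2) ^ 2 / INR (S v)).
Proof.
  intros Hx. rewrite besselI_Series.
  rewrite <- (is_series_unique _ _ (is_series_exp ((x / 2) ^ 2 / INR (S v)))),
    <- Series_scal_l.
  apply Series_le.
  - intros k. split; [apply bessel_term_nonneg|apply bessel_term_le_gauss]; lra.
  - exists ((x / 2) ^ v / INR (fact v) * exp ((x / 2) ^ 2 / INR (S v))).
    exact (is_series_scal_l _ _ _ (is_series_exp _)).
Qed.

(* Every partial sum of I_v(x) is dominated by a partial sum of the Taylor series of exp x,
   the k-th term by the (2k+v)-th one; hence I_v(x) <= exp x. *)
Lemma besselI_le_exp (v : nat) (x : R) : 0 <= x -> besselI v x <= exp x.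
Proof.
  intros Hx. rewrite besselI_Series.
  assert (Hy : 0 <= x / 2) by lra.
  set (e := fun n => x ^ n / INR (fact n)).
  assert (He : forall n, 0 <= e n)
    by (intros n; apply Rdiv_le_0_compat; [now apply pow_le|apply INR_fact_lt_0]).
  assert (Hterm : forall k, bessel_term v (x / 2) k <= e (2 * k + v)%nat).
  { intros k. pose proof (bessel_term_le_taylor v _ k Hy) as H.
    now replace (2 * (x / 2)) with x in H by field. }
  assert (Hpartial : forall N, sum_f_R0 (bessel_term v (x / 2)) N <= sum_f_R0 e (2 * N + v)).
  { induction N as [|N IH].
    - simpl. apply (Rle_trans _ _ _ (Hterm 0%nat)).
      destruct v; simpl; [lra|]. pose proof (cond_pos_sum e v He). lra.
    - replace (2 * S N + v)%nat with (S (S (2 * N + v))) by lia.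
      rewrite !tech5. pose proof (Hterm (S N)) as H.
      replace (2 * S N + v)%nat with (S (S (2 * N + v))) in H by lia.
      pose proof (He (S (2 * N + v))). lra. }
  assert (Hlim := proj2 (is_lim_seq_Reals _ _) (proj1 (is_series_Reals _ _)
                    (Series_correct _ (ex_series_bessel_term v _ Hy)))).
  apply (is_lim_seq_le _ _ _ _ (fun N => Rle_trans _ _ _ (Hpartial N) (exp_ge_taylor x _ Hx))
           Hlim (is_lim_seq_const _)).
Qed.

(* With m = v + 1 and z = 2E, the real power (2E)^(m-3) is z^v / z^2, so
   f_m(E) = e^{-4E} * (2E^2/m) * (v!/z^v * I_v(2z)): the last factor is I_v(2z)
   normalised by the leading term z^v/v! of its series. *)
Lemma fm_succ_eq (v : nat) (E : R) : 0 < E ->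
  fm (S v) E =
  exp (- (4 * E)) * (2 * E ^ 2 / INR (S v)) * (INR (fact v) / (2 * E) ^ v * besselI v (4 * E)).
Proof.
  intros HE. unfold fm. replace (S v - 1)%nat with v by lia.
  assert (Hpow : Rpower (2 * E) (INR (S v) - 3) = (2 * E) ^ v / (2 * E) ^ 2).
  { replace (INR (S v) - 3) with (INR v + - INR 2) by (rewrite (S_INR v); simpl (INR 2); lra).
    rewrite Rpower_plus, Rpower_Ropp, !Rpower_pow by lra. reflexivity. }
  rewrite Hpow.
  assert (0 < INR (S v)) by (apply lt_0_INR; lia).
  assert (0 < (2 * E) ^ v) by (apply pow_lt; lra).
  field. lra.
Qed.

Lemma fm_prefactor_pos (v : nat) (E : R) : 0 < E ->
  0 < exp (- (4 * E)) * (2 * E ^ 2 / INR (S v)).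
Proof.
  intros HE. apply Rmult_lt_0_compat; [apply exp_pos|].
  apply Rdiv_lt_0_compat; [nra|apply lt_0_INR; lia].
Qed.

Lemma fm_ge (v : nat) (E : R) : 0 < E ->
  exp (- (4 * E)) * (2 * E ^ 2 / INR (S v)) <= fm (S v) E.
Proof.
  intros HE. rewrite fm_succ_eq by lra.
  pose proof (besselI_ge_leading v (4 * E) ltac:(lra)) as HI.
  replace (4 * E / 2) with (2 * E) in HI by field.
  pose proof (INR_fact_lt_0 v). assert (0 < (2 * E) ^ v) by (apply pow_lt; lra).
  rewrite <- (Rmult_1_r (exp _ * _)) at 1.
  apply Rmult_le_compat_l; [apply Rlt_le, fm_prefactor_pos; lra|].
  apply (Rmult_le_reg_l ((2 * E) ^ v / INR (fact v))); [apply Rdiv_lt_0_compat; lra|].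
  replace ((2 * E) ^ v / INR (fact v) * (INR (fact v) / (2 * E) ^ v * besselI v (4 * E)))
    with (besselI v (4 * E)) by (field; lra).
  lra.
Qed.

Corollary fm_nonneg (v : nat) (E : R) : 0 < E -> 0 <= fm (S v) E.
Proof. intros HE. eapply Rle_trans; [apply Rlt_le, fm_prefactor_pos|apply fm_ge]; exact HE. Qed.

(* Upper bound for small intensities, from I_v(x) <= (x/2)^v/v! * exp((x/2)^2/(v+1)). *)
Lemma fm_le_gauss (v : nat) (E : R) : 0 < E ->
  fm (S v) E <= exp (- (4 * E) + 4 * E ^ 2 / INR (S v)) * (2 * E ^ 2 / INR (S v)).
Proof.
  intros HE. rewrite fm_succ_eq by lra.
  pose proof (besselI_le_gauss v (4 * E) ltac:(lra)) as HI.
  replace (4 * E / 2) with (2 * E) in HI by field.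
  pose proof (INR_fact_lt_0 v). assert (0 < (2 * E) ^ v) by (apply pow_lt; lra).
  replace (exp (- (4 * E) + 4 * E ^ 2 / INR (S v)) * (2 * E ^ 2 / INR (S v)))
    with (exp (- (4 * E)) * (2 * E ^ 2 / INR (S v)) * exp (4 * E ^ 2 / INR (S v)))
    by (rewrite exp_plus; ring).
  apply Rmult_le_compat_l; [apply Rlt_le, fm_prefactor_pos; lra|].
  replace (4 * E ^ 2) with ((2 * E) ^ 2) by ring.
  apply (Rmult_le_reg_l ((2 * E) ^ v / INR (fact v))); [apply Rdiv_lt_0_compat; lra|].
  replace ((2 * E) ^ v / INR (fact v) * (INR (fact v) / (2 * E) ^ v * besselI v (4 * E)))
    with (besselI v (4 * E)) by (field; lra).
  lra.
Qed.

(* Upper bound for large intensities, from I_v(x) <= exp x and v! <= v^v. *)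
Lemma fm_le_factorial (v : nat) (E : R) : 0 < E ->
  fm (S v) E <= (INR v / (2 * E)) ^ v * (2 * E ^ 2 / INR (S v)).
Proof.
  intros HE. rewrite fm_succ_eq by lra.
  pose proof (besselI_le_exp v (4 * E) ltac:(lra)) as HI.
  pose proof (le_INR _ _ (fact_le_pow v)) as Hfact. rewrite pow_INR in Hfact.
  pose proof (INR_fact_lt_0 v). assert (0 < (2 * E) ^ v) by (apply pow_lt; lra).
  assert (0 < 2 * E ^ 2 / INR (S v)) by (apply Rdiv_lt_0_compat; [nra|apply lt_0_INR; lia]).
  replace (exp (- (4 * E)) * (2 * E ^ 2 / INR (S v))
             * (INR (fact v) / (2 * E) ^ v * besselI v (4 * E)))
    with (INR (fact v) / (2 * E) ^ v * (exp (- (4 * E)) * besselI v (4 * E))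
             * (2 * E ^ 2 / INR (S v)))
    by ring.
  apply Rmult_le_compat_r; [lra|].
  replace ((INR v / (2 * E)) ^ v) with (INR v ^ v / (2 * E) ^ v)
    by (unfold Rdiv; now rewrite (Rpow_mult_distr (INR v)), pow_inv).
  rewrite <- (Rmult_1_r (INR v ^ v / (2 * E) ^ v)).
  apply Rmult_le_compat.
  - apply Rdiv_le_0_compat; lra.
  - apply Rmult_le_pos; [apply Rlt_le, exp_pos|].
    apply (Rle_trans _ ((4 * E / 2) ^ v / INR (fact v))); [|apply besselI_ge_leading; lra].
    apply Rdiv_le_0_compat; [apply pow_le|]; lra.
  - unfold Rdiv. apply Rmult_le_compat_r; [apply Rlt_le, Rinv_0_lt_compat|]; lra.
  - rewrite exp_Ropp. pose proof (exp_pos (4 * E)).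
    apply (Rmult_le_reg_l (exp (4 * E))); [lra|].
    rewrite <- Rmult_assoc, Rinv_r, Rmult_1_l, Rmult_1_r by lra. exact HI.
Qed.

Lemma exp_le_compat (x y : R) : x <= y -> exp x <= exp y.
Proof.
  intros [Hlt|Heq]; [now apply Rlt_le, exp_increasing|now rewrite Heq; right].
Qed.

Lemma exp_mult_INR (n : nat) (x : R) : exp (INR n * x) = exp x ^ n.
Proof.
  induction n as [|n IH]; [simpl; now rewrite Rmult_0_l, exp_0|].
  rewrite S_INR, Rmult_plus_distr_r, Rmult_1_l, exp_plus, IH. simpl. ring.
Qed.

Lemma exp_decay_of_shifted_geom (u : nat -> R) (K q : R) (N : nat) : 0 < q < 1 ->
  (forall v, (N <= v)%nat -> Rabs (u (S v)) <= K * q ^ v) -> exp_decay u.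
Proof.
  intros Hq Hu. exists q. split; [exact Hq|].
  exists (K / q), (S N). intros [|v] Hv; [lia|].
  eapply Rle_trans; [apply Hu; lia|].
  right. simpl. field. lra.
Qed.

(* w e^{-dw} <= (2/d) e^{-dw/2}, from dw/2 <= e^{dw/2}. *)
Lemma lin_exp_le (d w : R) : 0 < d -> w * exp (- d * w) <= 2 / d * exp (- d * w / 2).
Proof.
  intros Hd.
  assert (Hw : w <= 2 / d * exp (d * w / 2)).
  { pose proof (exp_ineq1_le (d * w / 2)).
    apply (Rmult_le_reg_l (d / 2)); [lra|].
    replace (d / 2 * (2 / d * exp (d * w / 2))) with (exp (d * w / 2)) by (field; lra). lra. }
  assert (Hsplit : exp (- d * w) = exp (- d * w / 2) * exp (- d * w / 2))
    by (rewrite <- exp_plus; f_equal; field).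
  assert (Hcancel : exp (d * w / 2) * exp (- d * w / 2) = 1)
    by (rewrite <- exp_plus, <- exp_0; f_equal; field).
  pose proof (exp_pos (- d * w / 2)).
  rewrite Hsplit, <- Rmult_assoc.
  apply (Rle_trans _ (2 / d * exp (d * w / 2) * exp (- d * w / 2) * exp (- d * w / 2))).
  - apply Rmult_le_compat_r; [lra|]. apply Rmult_le_compat_r; lra.
  - rewrite (Rmult_assoc (2 / d)), Hcancel. lra.
Qed.

Lemma exp_decay_of_lin_geom (u : nat -> R) (A q : R) : 0 <= A -> 0 < q < 1 ->
  (forall v, (1 <= v)%nat -> Rabs (u (S v)) <= A * INR v * q ^ v) -> exp_decay u.
Proof.
  intros HA Hq Hu.
  set (d := - ln q).
  assert (Hd : 0 < d)
    by (unfold d; assert (ln q < 0) by (rewrite <- ln_1; apply ln_increasing; lra); lra).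
  assert (Hqd : q = exp (- d)) by (unfold d; rewrite Ropp_involutive, exp_ln; lra).
  apply (exp_decay_of_shifted_geom u (A * (2 / d)) (exp (- d / 2)) 1).
  - split; [apply exp_pos|]. rewrite <- exp_0. apply exp_increasing. lra.
  - intros v Hv. eapply Rle_trans; [now apply Hu|].
    rewrite Hqd, <- !exp_mult_INR, Rmult_assoc.
    replace (INR v * - d) with (- d * INR v) by ring.
    replace (INR v * (- d / 2)) with (- d * INR v / 2) by field.
    rewrite (Rmult_assoc A). apply Rmult_le_compat_l; [exact HA|]. now apply lin_exp_le.
Qed.

Lemma linear_prefactor_le (a w : R) : 0 <= w ->
  2 * (a * w) ^ 2 / (w + 1) <= 2 * a ^ 2 * w.
Proof.
  intros Hw. apply (Rmult_le_reg_r (w + 1)); [lra|].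
  unfold Rdiv. rewrite Rmult_assoc, Rinv_l, Rmult_1_r by lra.
  pose proof (pow2_ge_0 a). nra.
Qed.

(* Linear intensity E = a v with a < 1: the Gaussian bound gives the rate e^{-4a(1-a)}. *)
Lemma fm_linear_small (a : R) (v : nat) : 0 < a < 1 -> (1 <= v)%nat ->
  fm (S v) (a * INR v) <= 2 * a ^ 2 * INR v * exp (- (4 * a * (1 - a))) ^ v.
Proof.
  intros Ha Hv. assert (Hw : 1 <= INR v) by (apply (le_INR 1); lia).
  eapply Rle_trans; [apply fm_le_gauss; nra|].
  rewrite S_INR, <- exp_mult_INR. set (w := INR v) in *.
  assert (Hquad : w ^ 2 / (w + 1) <= w)
    by (pose proof (linear_prefactor_le 1 w ltac:(lra)); rewrite pow1, Rmult_1_l in H; lra).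
  rewrite Rmult_comm. apply Rmult_le_compat.
  - apply Rdiv_le_0_compat; [nra|lra].
  - apply Rlt_le, exp_pos.
  - now apply linear_prefactor_le; lra.
  - apply exp_le_compat.
    replace (4 * (a * w) ^ 2 / (w + 1)) with (4 * a ^ 2 * (w ^ 2 / (w + 1))) by (field; lra).
    pose proof (pow2_ge_0 a). nra.
Qed.

(* Linear intensity E = a v with a >= 1: the bound (v/(2E))^v gives the rate 1/2. *)
Lemma fm_linear_large (a : R) (v : nat) : 1 <= a -> (1 <= v)%nat ->
  fm (S v) (a * INR v) <= 2 * a ^ 2 * INR v * (/ 2) ^ v.
Proof.
  intros Ha Hv. assert (Hw : 1 <= INR v) by (apply (le_INR 1); lia).
  eapply Rle_trans; [apply fm_le_factorial; nra|].
  rewrite S_INR. set (w := INR v) in *.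
  replace (w / (2 * (a * w))) with (/ (2 * a)) by (field; lra).
  rewrite Rmult_comm. apply Rmult_le_compat.
  - apply Rdiv_le_0_compat; [nra|lra].
  - apply pow_le, Rlt_le, Rinv_0_lt_compat. lra.
  - now apply linear_prefactor_le; lra.
  - apply pow_incr. split; [apply Rlt_le, Rinv_0_lt_compat; lra|].
    apply Rinv_le_contravar; lra.
Qed.

Theorem fm_linear_intensity_decay (a : R) : 0 < a ->
  exp_decay (fun m : nat => fm m (a * (INR m - 1))).
Proof.
  intros Ha.
  assert (Hfm : forall v, (1 <= v)%nat ->
            Rabs (fm (S v) (a * (INR (S v) - 1))) = fm (S v) (a * INR v)).
  { intros v Hv. rewrite S_INR. replace (INR v + 1 - 1) with (INR v) by ring.
    apply Rabs_pos_eq, fm_nonneg.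
    assert (1 <= INR v) by (apply (le_INR 1); lia). apply Rmult_lt_0_compat; lra. }
  destruct (Rlt_le_dec a 1) as [Ha1|Ha1].
  - apply (exp_decay_of_lin_geom _ (2 * a ^ 2) (exp (- (4 * a * (1 - a))))); [nra| |].
    + split; [apply exp_pos|]. rewrite <- exp_0 at 2. apply exp_increasing. nra.
    + intros v Hv. rewrite Hfm by exact Hv. now apply fm_linear_small.
  - apply (exp_decay_of_lin_geom _ (2 * a ^ 2) (/ 2)); [nra|lra|].
    intros v Hv. rewrite Hfm by exact Hv. now apply fm_linear_large.
Qed.

(* Part (iii): if E_m = O(c^m), then E_m is bounded and the Gaussian bound gives
   f_m(E_m) = O(E_m^2) = O(c^m). *)
Theorem fm_vanishing_intensity_decay (Em : nat -> R) :
  (forall m : nat, (2 <= m)%nat -> 0 < Em m) -> exp_decay Em ->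
  exp_decay (fun m : nat => fm m (Em m)).
Proof.
  intros Hpos [c [Hc [C [N HN]]]].
  exists c. split; [exact Hc|].
  exists (2 * C ^ 2 * exp (4 * C ^ 2)), (Nat.max N 2). intros [|v] Hm; [lia|].
  set (E := Em (S v)).
  assert (HE : 0 < E) by (apply Hpos; lia).
  assert (HEC : E <= C * c ^ S v) by (rewrite <- (Rabs_pos_eq E) by lra; apply HN; lia).
  assert (Hcm : 0 < c ^ S v <= 1)
    by (split; [apply pow_lt; lra|apply Rlt_le, pow_lt_1_compat; [lra|lia]]).
  assert (HE2 : E ^ 2 <= C ^ 2 * c ^ S v) by nra.
  assert (Hv : 1 <= INR (S v)) by (apply (le_INR 1); lia).
  rewrite Rabs_pos_eq by (apply fm_nonneg; lra).
  eapply Rle_trans; [apply fm_le_gauss; lra|].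
  replace (2 * C ^ 2 * exp (4 * C ^ 2) * c ^ S v)
    with (exp (4 * C ^ 2) * (2 * C ^ 2 * c ^ S v)) by ring.
  assert (Hdiv : E ^ 2 / INR (S v) <= E ^ 2).
  { apply (Rmult_le_reg_r (INR (S v))); [lra|].
    unfold Rdiv. rewrite Rmult_assoc, Rinv_l, Rmult_1_r by lra. pose proof (pow2_ge_0 E). nra. }
  apply Rmult_le_compat.
  - apply Rlt_le, exp_pos.
  - apply Rdiv_le_0_compat; [nra|lra].
  - apply exp_le_compat.
    replace (4 * E ^ 2 / INR (S v)) with (4 * (E ^ 2 / INR (S v))) by (field; lra). nra.
  - replace (2 * E ^ 2 / INR (S v)) with (2 * (E ^ 2 / INR (S v))) by (field; lra). lra.
Qed.

Lemma is_lim_seq_ln_div : is_lim_seq (fun m => ln (INR m) / INR m) 0.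
Proof.
  apply (is_lim_comp_seq (fun y => ln y / y) INR p_infty 0 is_lim_div_ln_p).
  - exists 0%nat. intros n _. discriminate.
  - exact is_lim_seq_INR.
Qed.

Lemma is_lim_seq_Rpower_neg (e : R) : e < 0 -> is_lim_seq (fun m => Rpower (INR m) e) 0.
Proof.
  intros He.
  assert (Hln : is_lim_seq (fun m => ln (INR m)) p_infty).
  { apply (is_lim_comp_seq ln INR p_infty p_infty is_lim_ln_p).
    - exists 0%nat. intros n _. discriminate.
    - exact is_lim_seq_INR. }
  assert (Hexp : is_lim_seq (fun m => ln (INR m) * e) m_infty).
  { apply (is_lim_seq_mult _ _ p_infty e); [exact Hln|apply is_lim_seq_const|].
    apply is_Rbar_mult_p_infty_neg. simpl. exact He. }
  apply (is_lim_seq_ext (fun m => exp (ln (INR m) * e))).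
  - intros m. unfold Rpower. now rewrite Rmult_comm.
  - apply (is_lim_comp_seq exp _ m_infty 0 is_lim_exp_m); [|exact Hexp].
    exists 0%nat. intros n _. discriminate.
Qed.

(* The exponent L m - 4a m^r + (2r-1) ln m tends to +oo when L > 0 and r < 1:
   divided by m it tends to L, since m^(r-1) -> 0 and ln m / m -> 0. *)
Lemma sublinear_exponent_lim (L a r : R) : 0 < L -> r < 1 ->
  is_lim_seq (fun m => L * INR m - 4 * a * Rpower (INR m) r + (2 * r - 1) * ln (INR m)) p_infty.
Proof.
  intros HL Hr.
  set (h := fun m => L - 4 * a * Rpower (INR m) (r - 1) + (2 * r - 1) * (ln (INR m) / INR m)).
  assert (Hh : is_lim_seq h L).
  { enough (H : is_lim_seq h (L - 4 * a * 0 + (2 * r - 1) * 0))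
      by now replace (L - 4 * a * 0 + (2 * r - 1) * 0) with L in H by ring.
    apply is_lim_seq_plus'; [apply is_lim_seq_minus'|].
    - apply is_lim_seq_const.
    - apply (is_lim_seq_scal_l _ (4 * a) 0), is_lim_seq_Rpower_neg. lra.
    - apply (is_lim_seq_scal_l _ (2 * r - 1) 0), is_lim_seq_ln_div. }
  apply (is_lim_seq_ext_loc (fun m => INR m * h m)).
  - exists 1%nat. intros m Hm. assert (Hx : 0 < INR m) by (apply lt_0_INR; lia).
    unfold h. replace (Rpower (INR m) r) with (INR m * Rpower (INR m) (r - 1)).
    + field. lra.
    + replace r with (1 + (r - 1)) at 2 by ring. now rewrite Rpower_plus, Rpower_1.
  - apply (is_lim_seq_mult _ _ p_infty L); [exact is_lim_seq_INR|exact Hh|].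
    apply is_Rbar_mult_p_infty_pos. simpl. exact HL.
Qed.

Lemma fm_sublinear_ge (a r b : R) (m : nat) : 0 < a -> 0 < b -> (1 <= m)%nat ->
  2 * a ^ 2 * exp (- ln b * INR m - 4 * a * Rpower (INR m) r + (2 * r - 1) * ln (INR m))
  <= fm m (a * Rpower (INR m) r) / b ^ m.
Proof.
  intros Ha Hb Hm. destruct m as [|v]; [lia|].
  set (x := INR (S v)). set (E := a * Rpower x r).
  assert (Hx : 0 < x) by (apply lt_0_INR; lia).
  assert (HE : E = a * exp (r * ln x)) by reflexivity.
  assert (HEpos : 0 < E) by (rewrite HE; apply Rmult_lt_0_compat; [lra|apply exp_pos]).
  assert (Hbm : b ^ S v = exp (- (- ln b * x))).
  { unfold x. rewrite Ropp_mult_distr_l, Ropp_involutive, Rmult_comm, exp_mult_INR.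
    now rewrite exp_ln. }
  replace (2 * a ^ 2 * exp (- ln b * x - 4 * a * Rpower x r + (2 * r - 1) * ln x))
    with (exp (- (4 * E)) * (2 * E ^ 2 / x) / b ^ S v).
  - unfold Rdiv at 1 3. apply Rmult_le_compat_r.
    + apply Rlt_le, Rinv_0_lt_compat, pow_lt. lra.
    + now apply fm_ge.
  - fold E. rewrite Hbm, HE. unfold Rpower.
    replace (- ln b * x - 4 * a * exp (r * ln x) + (2 * r - 1) * ln x)
      with (- (4 * (a * exp (r * ln x))) + r * ln x + r * ln x + - ln x + - - (- ln b * x))
      by ring.
    rewrite !exp_plus, !exp_Ropp, exp_ln by exact Hx.
    field. repeat split; try lra; apply Rgt_not_eq, exp_pos.
Qed.

Theorem fm_sublinear_intensity_no_decay (a r b : R) : 0 < a -> r < 1 -> 0 < b < 1 ->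
  is_lim_seq (fun m : nat => fm m (a * Rpower (INR m) r) / b ^ m) p_infty.
Proof.
  intros Ha Hr Hb.
  set (g := fun m => - ln b * INR m - 4 * a * Rpower (INR m) r + (2 * r - 1) * ln (INR m)).
  assert (HL : 0 < - ln b)
    by (assert (ln b < 0) by (rewrite <- ln_1; apply ln_increasing; lra); lra).
  apply (is_lim_seq_le_p_loc (fun m => g m * (2 * a ^ 2))).
  - exists 1%nat. intros m Hm.
    eapply Rle_trans; [|apply fm_sublinear_ge; [lra|lra|exact Hm]].
    pose proof (exp_ineq1_le (g m)). pose proof (pow2_ge_0 a). unfold g in *. nra.
  - apply (is_lim_seq_mult _ _ p_infty (2 * a ^ 2)).
    + now apply sublinear_exponent_lim.
    + apply is_lim_seq_const.
    + apply is_Rbar_mult_p_infty_pos. simpl. nra.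
Qed.

Theorem mainTheorem7 :
  (* (i) *)
  (forall a : R, 0 < a ->
     exp_decay (fun m : nat => fm m (a * (INR m - 1)))) /\
  (* (ii) *)
  (forall a r : R, 0 < a -> r < 1 ->
     forall b : R, 0 < b < 1 ->
       is_lim_seq (fun m : nat => fm m (a * Rpower (INR m) r) / b ^ m) p_infty) /\
  (* (iii) *)
  (forall Em : nat -> R,
     (forall m : nat, (2 <= m)%nat -> 0 < Em m) ->
     exp_decay Em ->
     exp_decay (fun m : nat => fm m (Em m))).
Proof.
  split; [exact fm_linear_intensity_decay|split].
  - intros a r Ha Hr b Hb. now apply fm_sublinear_intensity_no_decay.
  - exact fm_vanishing_intensity_decay.
Qed.
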